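(* For each $n$ let $\mathcal C_n\subset S_n$ be a conjugacy class consisting of odd permutations with $\mathrm{supp}(\mathcal C_n)\ge 2$, and set $t_n=\frac n2\log n$. Then for every $\epsilon\in(0,1)$, $$\lim_{n\to\infty}d_2\big(h_{\mathcal C_n,(1-\epsilon)t_n},u_n\big)=\infty,$$ where $u_n$ is the uniform measure on $S_n$.
   Context: For a conjugacy class $\mathcal C$ of $S_n$, $q_{\mathcal C}$ is the uniform probability measure on $\mathcal C$ and $\mathrm{supp}(\mathcal C)$ is the number of points of $\{1,\dots,n\}$ not fixed by an element of $\mathcal C$. $h_{\mathcal C,t}=h_{q_{\mathcal C},t}=e^{-t}\sum_{k\ge0}\frac{t^k}{k!}q_{\mathcal C}^{(k)}$, with $q^{(k)}$ the $k$-fold convolution power. $d_2(p,u)=\big(|G|\sum_{x\in G}|p(x)-u(x)|^2\big)^{1/2}$. *)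

From Stdlib Require Import Reals ClassicalEpsilon.
From mathcomp Require Import all_boot all_fingroup.

Set Implicit Arguments. Unset Strict Implicit. Unset Printing Implicit Defensive.

Local Open Scope R_scope.

Definition Rsum (T : finType) (F : T -> R) : R := \big[Rplus/R0]_(x : T) F x.

Section Measures.
Variable n : nat.
Notation G := {perm 'I_n}.

Definition unif_on (C : {set G}) (x : G) : R :=
  if x \in C then / INR #|C| else 0.

Definition unifG (x : G) : R := / INR #|G|.

Definition conv (p q : G -> R) (x : G) : R :=
  Rsum (fun y : G => p y * q ((y^-1)%g * x)%g).

Fixpoint convpow (q : G -> R) (k : nat) : G -> R :=
  match k with
  | O => fun x => if x == 1%g then 1 else 0
  | S k' => conv (convpow q k') q
  end.

Definition series_value (f : nat -> R) : R :=
  epsilon (inhabits 0) (fun l => infinite_sum f l).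

Definition heat (q : G -> R) (t : R) (x : G) : R :=
  series_value (fun k => exp (- t) * (t ^ k / INR (Factorial.fact k)) * convpow q k x).

Definition dist2 (p u : G -> R) : R :=
  sqrt (INR #|G| * Rsum (fun x : G => Rsqr (Rabs (p x - u x)))).

End Measures.

Definition supp_perm (n : nat) (s : {perm 'I_n}) : nat :=
  #|[set i : 'I_n | s i != i]|.

From Stdlib Require Import Reals ClassicalEpsilon Lra.
From HB Require Import structures.
From mathcomp Require Import all_boot all_fingroup.

(* The divergence already shows up at the identity permutation.  For any
   kernel q with values in [0,1] and any t >= 0, the k = 0 term of the heat
   series gives h_{q,t}(1) >= e^{-t}, while the single summand x = 1 of d_2
   gives d_2(p,u) >= sqrt|G| |p(1) - u(1)|.  Hence, with N = |S_n| = n!,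
       d_2(h_{q,t}, u_n) >= sqrt(N) e^{-t} - 1/sqrt(N).
   Since ln n! >= n ln n - n, for t = (1-eps) (n/2) ln n we get
       sqrt(n!) e^{-t} = exp(ln n!/2 - t) >= exp(n (eps ln n - 1)/2),
   which is at least exp(n/2) once eps ln n >= 2; so d_2 >= exp(n/2) - 1 >= n/2.
   The file first sets up finite real sums, then bounds convolution powers
   (to make the heat series converge), proves the two lower bounds above,
   the Stirling-type estimate for n!, and concludes. *)

Set Implicit Arguments. Unset Strict Implicit. Unset Printing Implicit Defensive.

Local Open Scope R_scope.

Lemma Rplus_associative : associative Rplus.
Proof. by move=> x y z; rewrite Rplus_assoc. Qed.
Lemma Rplus_commutative : commutative Rplus.
Proof. by move=> x y; rewrite Rplus_comm. Qed.
Lemma Rplus_left_id : left_id R0 Rplus.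
Proof. by move=> x; rewrite Rplus_0_l. Qed.

HB.instance Definition _ :=
  Monoid.isComLaw.Build R R0 Rplus Rplus_associative Rplus_commutative Rplus_left_id.

Section FiniteSums.
Variable T : finType.

Lemma Rsum_ge0 (F : T -> R) : (forall x, 0 <= F x) -> 0 <= Rsum F.
Proof.
move=> F_ge0; apply: (big_ind (fun a => 0 <= a)) => //; first lra.
by move=> a b; lra.
Qed.

Lemma Rsum_le (F F' : T -> R) : (forall x, F x <= F' x) -> Rsum F <= Rsum F'.
Proof.
move=> le_FF'; apply: (big_ind2 (fun a b => a <= b)) => //; first lra.
by move=> a b c d; lra.
Qed.

Lemma Rsum_const (c : R) : Rsum (fun _ : T => c) = INR #|T| * c.
Proof.
rewrite -sum1_card /Rsum.
apply: (big_ind2 (fun (a : R) (b : nat) => a = INR b * c)) => //=.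
- lra.
- by move=> a b a' b' -> ->; rewrite plus_INR; lra.
- by move=> _ _; lra.
Qed.

Lemma Rsum_ge_term (F : T -> R) (x0 : T) : (forall x, 0 <= F x) -> F x0 <= Rsum F.
Proof.
move=> F_ge0; rewrite /Rsum (bigD1 x0) //=.
have : 0 <= \big[Rplus/R0]_(i | i != x0) F i.
  by apply: (big_ind (fun a => 0 <= a)) => //; [lra | move=> a b; lra].
lra.
Qed.

End FiniteSums.

Section ConvolutionPowers.
Variable n : nat.
Notation G := {perm 'I_n}.

Lemma convpow_bound (q : G -> R) (q01 : forall x, 0 <= q x <= 1) k x :
  0 <= convpow q k x <= INR #|G| ^ k.
Proof.
elim: k x => [|k IHk] x /=; first by case: (x == 1%g); lra.
split.
  apply: Rsum_ge0 => y; apply: Rmult_le_pos; first by case: (IHk y).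
  by case: (q01 ((y^-1) * x)%g).
apply: Rle_trans (@Rsum_le _ _ (fun _ => INR #|G| ^ k) _) _; last first.
  by rewrite Rsum_const; apply: Rle_refl.
move=> y; have [? ?] := IHk y; have [? ?] := q01 ((y^-1) * x)%g.
by rewrite -[X in _ <= X]Rmult_1_r; apply: Rmult_le_compat.
Qed.

Lemma unif_on_bound (C : {set G}) x : 0 <= unif_on C x <= 1.
Proof.
rewrite /unif_on; case: ifP => xC; last lra.
have C_ge1 : 1 <= INR #|C|.
  by apply: (le_INR 1); apply/leP/card_gt0P; exists x.
split; first by left; apply: Rinv_0_lt_compat; lra.
by rewrite -Rinv_1; apply: Rinv_le_contravar; lra.
Qed.

End ConvolutionPowers.

Lemma series_term_le (f : nat -> R) l k :
  (forall i, 0 <= f i) -> infinite_sum f l -> f k <= l.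
Proof.
move=> f_ge0 sum_fl.
have grow : Un_growing (sum_f_R0 f) by move=> m /=; have := f_ge0 m.+1; lra.
have : sum_f_R0 f k <= l by apply: growing_ineq.
apply: Rle_trans.
case: k => [|k] /=; first lra.
by have := cond_pos_sum f k f_ge0; lra.
Qed.

Lemma pow_div_fact_le_exp y k : 0 <= y -> y ^ k / INR (Factorial.fact k) <= exp y.
Proof.
move=> y_ge0; rewrite /Rdiv Rmult_comm.
have exp_series := proj2_sig (exist_exp y); rewrite /exp_in -/(exp y) in exp_series.
apply: (series_term_le k _ exp_series) => i.
apply: Rmult_le_pos; last exact: pow_le.
by left; apply: Rinv_0_lt_compat; apply: lt_0_INR; apply: Factorial.lt_O_fact.
Qed.

Lemma sum_f_R0_scal (g : nat -> R) c m :
  sum_f_R0 (fun i => c * g i) m = c * sum_f_R0 g m.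
Proof. by elim: m => [|m IHm] /=; [lra | rewrite IHm; lra]. Qed.

Lemma Un_cv_scal c (s : nat -> R) l : Un_cv s l -> Un_cv (fun m => c * s m) (c * l).
Proof.
apply: CV_mult => e e_gt0; exists 0%N => m _.
by rewrite /Rdist Rminus_diag Rabs_R0.
Qed.

Section HeatKernel.
Variable n : nat.
Notation G := {perm 'I_n}.
Variable q : G -> R.
Hypothesis q01 : forall x, 0 <= q x <= 1.
Variable t : R.
Hypothesis t_ge0 : 0 <= t.

Let heat_term (x : G) (k : nat) : R :=
  exp (- t) * (t ^ k / INR (Factorial.fact k)) * convpow q k x.

Lemma poisson_weight_ge0 k : 0 <= exp (- t) * (t ^ k / INR (Factorial.fact k)).
Proof.
apply: Rmult_le_pos; first by left; apply: exp_pos.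
apply: Rmult_le_pos; first exact: pow_le.
by left; apply: Rinv_0_lt_compat; apply: lt_0_INR; apply: Factorial.lt_O_fact.
Qed.

Lemma heat_term_ge0 x k : 0 <= heat_term x k.
Proof.
apply: Rmult_le_pos; first exact: poisson_weight_ge0.
by case: (convpow_bound q01 k x).
Qed.

(* The heat series converges: its terms are dominated by
   e^{-t} (t |G|)^k / k!, whose sum is e^{-t} e^{t |G|}. *)
Lemma heat_series_cv x : {l | Un_cv (sum_f_R0 (heat_term x)) l}.
Proof.
set y := t * INR #|G|.
apply: (Rseries_CV_comp _ (fun k => exp (- t) * (/ INR (Factorial.fact k) * y ^ k))).
  move=> k; split; first exact: heat_term_ge0.
  have [_ qk_le] := convpow_bound q01 k x.
  apply: Rle_trans (Rmult_le_compat_l _ _ _ (poisson_weight_ge0 k) qk_le) _.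
  by rewrite /y Rpow_mult_distr /Rdiv; lra.
exists (exp (- t) * exp y) => e e_gt0.
have exp_series := proj2_sig (exist_exp y); rewrite /exp_in -/(exp y) in exp_series.
have [N HN] := Un_cv_scal (exp (- t)) exp_series e_gt0.
by exists N => m le_Nm; rewrite sum_f_R0_scal; apply: HN.
Qed.

(* The k = 0 term of the heat series: h_{q,t}(1) >= e^{-t}. *)
Lemma heat_one_ge : exp (- t) <= heat q t 1%g.
Proof.
change (exp (- t) <= series_value (heat_term 1%g)).
have [l cv_l] := heat_series_cv 1%g.
have sum_value : infinite_sum (heat_term 1%g) (series_value (heat_term 1%g)).
  by apply: epsilon_spec; exists l.
have := series_term_le 0 (heat_term_ge0 1%g) sum_value.
by rewrite /heat_term /= eqxx /Rdiv Rinv_1; lra.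
Qed.

End HeatKernel.

(* Non-strict monotonicity of ln and exp (Stdlib only states the strict one). *)
Lemma ln_le x y : 0 < x -> x <= y -> ln x <= ln y.
Proof. by move=> x_gt0 [lt_xy | ->]; [left; apply: ln_increasing | right]. Qed.

Lemma exp_le x y : x <= y -> exp x <= exp y.
Proof. by move=> [lt_xy | ->]; [left; apply: exp_increasing | right]. Qed.

Lemma dist2_ge_point n (p u : {perm 'I_n} -> R) x :
  sqrt (INR #|{perm 'I_n}|) * Rabs (p x - u x) <= dist2 p u.
Proof.
have N_ge0 := pos_INR #|{perm 'I_n}|.
have -> : Rabs (p x - u x) = sqrt (Rsqr (Rabs (p x - u x))).
  by rewrite sqrt_Rsqr //; apply: Rabs_pos.
rewrite /dist2 -sqrt_mult_alt //.
apply: sqrt_le_1_alt; apply: Rmult_le_compat_l => //.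
by apply: Rsum_ge_term => y; apply: Rle_0_sqr.
Qed.

Lemma heat_dist2_ge n (q : {perm 'I_n} -> R) t :
  (forall x, 0 <= q x <= 1) -> 0 <= t ->
  sqrt (INR #|{perm 'I_n}|) * exp (- t) - / sqrt (INR #|{perm 'I_n}|)
  <= dist2 (heat q t) (@unifG n).
Proof.
move=> q01 t_ge0; set s := sqrt _.
have N_gt0 : 0 < INR #|{perm 'I_n}| by apply: lt_0_INR; apply/ltP/card_gt0P; exists 1%g.
have s_gt0 : 0 < s by apply: sqrt_lt_R0.
have N_ss : INR #|{perm 'I_n}| = s * s by rewrite sqrt_sqrt //; lra.
apply: Rle_trans (dist2_ge_point _ _ 1%g).
apply: Rle_trans (Rmult_le_compat_l _ _ _ (Rlt_le _ _ s_gt0) (Rle_abs _)).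
have h1 := heat_one_ge q01 t_ge0.
rewrite /unifG -/s N_ss Rinv_mult Rmult_minus_distr_l -Rmult_assoc Rinv_r; last lra.
by rewrite Rmult_1_l; apply: Rplus_le_compat_r; apply: Rmult_le_compat_l; lra.
Qed.

Lemma card_perm_fact n : INR #|{perm 'I_n}| = INR (Factorial.fact n).
Proof.
by rewrite card_Sn; congr INR; elim: n => [|n IHn] //=; rewrite factS IHn.
Qed.

(* Stirling-type lower bound: ln n! >= n ln n - n, from n^n / n! <= e^n. *)
Lemma ln_fact_ge n : (1 <= n)%N ->
  INR n * ln (INR n) - INR n <= ln (INR (Factorial.fact n)).
Proof.
move=> n_ge1.
have n_gt0 : 0 < INR n by apply: lt_0_INR; apply/ltP.
have fact_gt0 : 0 < INR (Factorial.fact n) by apply: lt_0_INR; apply: Factorial.lt_O_fact.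
have taylor := pow_div_fact_le_exp n (Rlt_le _ _ n_gt0).
have pow_bound : INR n ^ n <= exp (INR n) * INR (Factorial.fact n).
  by rewrite /Rdiv in taylor; apply: (Rmult_le_reg_r (/ INR (Factorial.fact n)));
    [apply: Rinv_0_lt_compat | rewrite Rmult_assoc Rinv_r; lra].
have := ln_le (pow_lt _ n n_gt0) pow_bound.
by rewrite ln_mult ?ln_exp ?ln_pow //; [lra | apply: exp_pos].
Qed.

Lemma sqrt_fact_exp_ge n eps : (1 <= n)%N -> eps <= 1 -> 2 <= eps * ln (INR n) ->
  exp (INR n / 2) <=
  sqrt (INR (Factorial.fact n)) * exp (- ((1 - eps) * (INR n / 2 * ln (INR n)))).
Proof.
move=> n_ge1 eps_le1 eps_ln.
have fact_gt0 : 0 < INR (Factorial.fact n) by apply: lt_0_INR; apply: Factorial.lt_O_fact.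
have sqrt_exp : sqrt (INR (Factorial.fact n)) = exp (ln (INR (Factorial.fact n)) / 2).
  apply: sqrt_lem_1; [lra | left; apply: exp_pos |].
  by rewrite -exp_plus -[X in _ = X]exp_ln //; congr exp; field.
rewrite sqrt_exp -exp_plus; apply: exp_le.
have := ln_fact_ge n_ge1.
have n_ge0 := pos_INR n.
have : INR n * 1 <= INR n * (eps * ln (INR n) - 1) by apply: Rmult_le_compat_l; lra.
lra.
Qed.

Theorem theorem5p2
  (C : forall n : nat, {set {perm 'I_n}})
  (HC : forall n : nat, (2 <= n)%N ->
     [/\ C n \in classes [set: {perm 'I_n}],
         (forall s, s \in C n -> odd_perm s)
       & (forall s, s \in C n -> (2 <= supp_perm s)%N)])
  (eps : R) (Heps : 0 < eps < 1) :
  cv_infty (fun n : nat =>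
     dist2 (heat (unif_on (C n)) ((1 - eps) * (INR n / 2 * ln (INR n))))
        (@unifG n)).
Proof.
move=> M.
have [n0 n0_large] := INR_unbounded (Rmax (exp (2 / eps)) (2 * M)).
exists n0 => n le_n0_n.
have n_large : Rmax (exp (2 / eps)) (2 * M) < INR n.
  by apply: Rlt_le_trans n0_large (le_INR _ _ le_n0_n).
have exp_le_n : exp (2 / eps) <= INR n by have := Rmax_l (exp (2 / eps)) (2 * M); lra.
have M_lt_n : 2 * M < INR n by have := Rmax_r (exp (2 / eps)) (2 * M); lra.
have n_ge1 : (1 <= n)%N by apply/ltP; apply: INR_lt; have := exp_pos (2 / eps); rewrite /=; lra.
have ln_ge : 2 / eps <= ln (INR n).
  by rewrite -[2 / eps]ln_exp; apply: ln_le => //; apply: exp_pos.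
have eps_ln : 2 <= eps * ln (INR n).
  have -> : 2 = eps * (2 / eps) by field; lra.
  by apply: Rmult_le_compat_l; lra.
have t_ge0 : 0 <= (1 - eps) * (INR n / 2 * ln (INR n)).
  have ln_ge0 : 0 <= ln (INR n) by nra.
  by apply: Rmult_le_pos; [lra | apply: Rmult_le_pos; [have := pos_INR n; lra | lra]].
have dist_ge := heat_dist2_ge (@unif_on_bound n (C n)) t_ge0.
have growth := sqrt_fact_exp_ge n_ge1 (Rlt_le _ _ (proj2 Heps)) eps_ln.
rewrite card_perm_fact in dist_ge.
have inv_sqrt_le1 : / sqrt (INR (Factorial.fact n)) <= 1.
  rewrite -Rinv_1; apply: Rinv_le_contravar; first lra.
  by rewrite -sqrt_1; apply: sqrt_le_1_alt; apply: (le_INR 1); apply: Factorial.lt_O_fact.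
have := exp_ineq1_le (INR n / 2).
lra.
Qed.
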